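(* Let $\Phi$ be a channel matrix whose rows $P^1,P^2,P^3\in\Delta^n$ are in general position, let $Q^0$ be the equidistant point from $P^1,P^2,P^3$ and $\boldsymbol\lambda^0$ its barycentric coordinate. Suppose $\lambda^0_1<0$, $\lambda^0_2\ge0$, $\lambda^0_3\ge0$, and let $Q^1=\pi(Q^0|L(P^2,P^3))$. Then the output distribution achieving the channel capacity is $Q^\ast=Q^1$ and the channel capacity is $C=D(P^2\|Q^1)$.
   Context: $\Delta^n=\{Q:Q_j>0,\sum_jQ_j=1\}$, $\bar\Delta^m=\{\boldsymbol\lambda:\lambda_i\ge0,\sum_i\lambda_i=1\}$; $D(Q\|Q')=\sum_jQ_j\log(Q_j/Q'_j)$. Rows are in general position if $P^2-P^1,\dots,P^m-P^1$ are linearly independent. $L(S^1,\dots,S^r)=\{\sum_i\lambda_iS^i:\sum_i\lambda_i=1\}\cap\Delta^n$; for such an affine subspace $L$, $\pi(Q'|L)$ is the unique $Q\in L$ minimizing $D(Q\|Q')$. The barycentric coordinate of $Q\in L(P^1,\dots,P^m)$ is the unique $\boldsymbol\lambda$ with $\sum_i\lambda_i=1$, $Q=\sum_i\lambda_iP^i$. The equidistant point is the unique $Q^0\in L(P^1,\dots,P^m)$ with all $D(P^i\|Q^0)$ equal. Mutual information $I(\boldsymbol\lambda,\Phi)=\sum_{i,j}\lambda_iP^i_j\log(P^i_j/Q_j)$ with $Q=\boldsymbol\lambda\Phi$; capacity $C=\max_{\boldsymbol\lambda\in\bar\Delta^m}I(\boldsymbol\lambda,\Phi)$; the capacity-achieving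 output distribution is $Q^\ast=\boldsymbol\lambda^\ast\Phi$ for a maximizer $\boldsymbol\lambda^\ast$ (unique). *)

From HB Require Import structures.
From mathcomp Require Import all_boot all_order all_algebra.
From mathcomp Require Import reals exp.
Set Implicit Arguments. Unset Strict Implicit. Unset Printing Implicit Defensive.
Import Order.TTheory GRing.Theory Num.Theory.
Local Open Scope ring_scope.

Section Defs.
Variable R : realType.

Definition in_open_simplex (n : nat) (Q : 'rV[R]_n) : Prop :=
  (forall j, 0 < Q 0 j) /\ \sum_j Q 0 j = 1.

Definition in_closed_simplex (m : nat) (l : 'rV[R]_m) : Prop :=
  (forall i, 0 <= l 0 i) /\ \sum_i l 0 i = 1.

Definition KL (n : nat) (Q Q' : 'rV[R]_n) : R :=
  \sum_j Q 0 j * ln (Q 0 j / Q' 0 j).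

Definition general_position (m n : nat) (Phi : 'M[R]_(m.+1, n)) : bool :=
  row_free (\matrix_(i < m) (row (lift ord0 i) Phi - row ord0 Phi)).

Definition bary_coord (r n : nat) (S : 'M[R]_(r, n)) (Q : 'rV[R]_n) (l : 'rV[R]_r)
  : Prop := \sum_i l 0 i = 1 /\ Q = l *m S.

Definition in_L (r n : nat) (S : 'M[R]_(r, n)) (Q : 'rV[R]_n) : Prop :=
  (exists l : 'rV[R]_r, bary_coord S Q l) /\ in_open_simplex Q.

Definition equidistant (m n : nat) (Phi : 'M[R]_(m, n)) (Q : 'rV[R]_n) : Prop :=
  in_L Phi Q /\ forall i j, KL (row i Phi) Q = KL (row j Phi) Q.

Definition is_projection (r n : nat) (S : 'M[R]_(r, n)) (Q' Q : 'rV[R]_n) : Prop :=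
  in_L S Q /\ forall Q2, in_L S Q2 -> KL Q Q' <= KL Q2 Q'.

Definition mutual_info (m n : nat) (l : 'rV[R]_m) (Phi : 'M[R]_(m, n)) : R :=
  \sum_i \sum_j l 0 i * Phi i j * ln (Phi i j / (l *m Phi) 0 j).

End Defs.

Definition i1 : 'I_3 := @Ordinal 3 0 isT.
Definition i2 : 'I_3 := @Ordinal 3 1 isT.
Definition i3 : 'I_3 := @Ordinal 3 2 isT.

From HB Require Import structures.
From mathcomp Require Import all_boot all_order all_algebra.
From mathcomp Require Import reals exp.
From mathcomp Require Import ring lra.
Set Implicit Arguments. Unset Strict Implicit. Unset Printing Implicit Defensive.
Import Order.TTheory GRing.Theory Num.Theory.
Local Open Scope ring_scope.

(* Write d(P) = sum_j P_j ln (Q1_j / Q0_j), so that D(P || Q1) = D(P || Q0) - d(P)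
   with d linear in P.  Minimality of Q1 on the line through P2 and P3 gives the
   first-order condition d(P2) = d(P3) (perturb Q1 along P2 - P3 and bound the
   divergence by the chi-square distance).  Then
     d(Q1) = D(Q1 || Q0) >= 0 >= -D(Q0 || Q1) = d(Q0) = l1 d(P1) + (1 - l1) d(P2),
   and l1 < 0 forces d(P1) >= d(P2); as the P_i are equidistant from Q0,
   D(P1 || Q1) <= D(P2 || Q1) = D(P3 || Q1).  The identity
   I(l) = sum_i l_i D(P_i || Q1) - D(l Phi || Q1) then bounds I by D(P2 || Q1), with
   equality only if l Phi = Q1.  Finally Q1 lies on the segment [P2, P3], since a
   point of the line beyond P2 or P3 is not equidistant from them, so some input
   supported on {2, 3} attains the bound. *)

Section LnBounds.
Variable R : realType.
Implicit Types a b x : R.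

Lemma ln_le_subr1 x : 0 < x -> ln x <= x - 1.
Proof.
move=> x0; have := @le_ln1Dx R (x - 1).
by rewrite (_ : 1 + (x - 1) = x); [apply; lra | ring].
Qed.

Lemma ln_lt_subr1 x : 0 < x -> x != 1 -> ln x < x - 1.
Proof.
move=> x0 x1; have := @expR_gt1Dx R (x - 1); rewrite subr_eq0 => /(_ x1).
rewrite (_ : 1 + (x - 1) = x); last by ring.
by rewrite -(ltr_ln (x := x)) ?posrE ?expR_gt0 // expRK.
Qed.

Lemma ln_ratio_ge a b : 0 < a -> 0 < b -> a - b <= a * (ln a - ln b).
Proof.
move=> a0 b0; have := ln_le_subr1 (divr_gt0 b0 a0); rewrite ln_div ?posrE // => h.
have -> : a - b = a * (1 - b / a) by field; rewrite gt_eqF.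
by rewrite ler_pM2l //; lra.
Qed.

Lemma ln_ratio_gt a b : 0 < a -> 0 < b -> a != b -> a - b < a * (ln a - ln b).
Proof.
move=> a0 b0 ab; have ba1 : b / a != 1.
  by apply: contra ab => /eqP ba; rewrite -[b](divfK (lt0r_neq0 a0)) ba mul1r.
have := ln_lt_subr1 (divr_gt0 b0 a0) ba1; rewrite ln_div ?posrE // => h.
have -> : a - b = a * (1 - b / a) by field; rewrite gt_eqF.
by rewrite ltr_pM2l //; lra.
Qed.

Lemma ln_ratio_le a b : 0 < a -> 0 < b -> a * (ln a - ln b) <= a * (a - b) / b.
Proof.
move=> a0 b0; have := ln_le_subr1 (divr_gt0 a0 b0); rewrite ln_div ?posrE // => h.
by rewrite -mulrA ler_pM2l // mulrBl divff ?gt_eqF.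
Qed.

Lemma ln_monotone_mul_ge0 a b : 0 < a -> 0 < b -> 0 <= (a - b) * (ln a - ln b).
Proof.
move=> a0 b0; have [ba|ab] := lerP b a.
  by rewrite mulr_ge0 // subr_ge0 ?ler_ln ?posrE.
by rewrite mulr_le0 // subr_le0 ?ler_ln ?posrE // ltW.
Qed.

End LnBounds.

Section Divergence.
Variables (R : realType) (n : nat).
Implicit Types P Q : 'rV[R]_n.

Definition llr Q (Q' : 'rV[R]_n) P := \sum_j P 0 j * (ln (Q' 0 j) - ln (Q 0 j)).

Lemma KL_lnE P Q : in_open_simplex P -> in_open_simplex Q ->
  KL P Q = \sum_j P 0 j * (ln (P 0 j) - ln (Q 0 j)).
Proof. by move=> [P0 _] [Q0 _]; apply: eq_bigr => j _; rewrite ln_div ?posrE. Qed.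

Lemma KL_sub_sumE P Q : in_open_simplex P -> in_open_simplex Q ->
  KL P Q = \sum_j (P 0 j * (ln (P 0 j) - ln (Q 0 j)) - (P 0 j - Q 0 j)).
Proof.
move=> hP hQ; rewrite sumrB [X in _ - X]sumrB hP.2 hQ.2 subrr subr0; exact: KL_lnE.
Qed.

Lemma KL_ge0 P Q : in_open_simplex P -> in_open_simplex Q -> 0 <= KL P Q.
Proof.
move=> hP hQ; rewrite KL_sub_sumE //; apply: sumr_ge0 => j _.
by rewrite subr_ge0 ln_ratio_ge ?hP.1 ?hQ.1.
Qed.

Lemma KL_eq0 P Q : in_open_simplex P -> in_open_simplex Q -> KL P Q = 0 -> P = Q.
Proof.
move=> hP hQ; rewrite KL_sub_sumE // => /psumr_eq0P KL0.
apply/rowP => j; apply/eqP/negPn/negP => PQ.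
have := ln_ratio_gt (hP.1 j) (hQ.1 j) PQ; rewrite -subr_gt0 KL0 ?ltxx // => k _.
by rewrite subr_ge0 ln_ratio_ge ?hP.1 ?hQ.1.
Qed.

Lemma KLxx P : in_open_simplex P -> KL P P = 0.
Proof. by move=> hP; rewrite KL_lnE //; apply: big1 => j _; rewrite subrr mulr0. Qed.

Lemma KL_le_chi2 P Q : in_open_simplex P -> in_open_simplex Q ->
  KL P Q <= \sum_j (P 0 j - Q 0 j) ^+ 2 / Q 0 j.
Proof.
move=> hP hQ; rewrite KL_sub_sumE //; apply: ler_sum => j _.
have Q0 := lt0r_neq0 (hQ.1 j).
have -> : (P 0 j - Q 0 j) ^+ 2 / Q 0 j = P 0 j * (P 0 j - Q 0 j) / Q 0 j - (P 0 j - Q 0 j).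
  by field.
by rewrite lerD2r ln_ratio_le ?hP.1 ?hQ.1.
Qed.

Lemma KL_llr P Q (Q' : 'rV[R]_n) :
  in_open_simplex P -> in_open_simplex Q -> in_open_simplex Q' ->
  KL P Q' = KL P Q - llr Q Q' P.
Proof. by move=> hP hQ hQ'; rewrite !KL_lnE // -sumrB; apply: eq_bigr => j _; ring. Qed.

Lemma llr_self Q (Q' : 'rV[R]_n) :
  in_open_simplex Q -> in_open_simplex Q' -> llr Q Q' Q' = KL Q' Q.
Proof. by move=> hQ hQ'; rewrite KL_lnE. Qed.

Lemma llr_ref Q (Q' : 'rV[R]_n) :
  in_open_simplex Q -> in_open_simplex Q' -> llr Q Q' Q = - KL Q Q'.
Proof. by move=> hQ hQ'; rewrite KL_lnE // -sumrN; apply: eq_bigr => j _; ring. Qed.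

Lemma llrD Q (Q' P P' : 'rV[R]_n) : llr Q Q' (P + P') = llr Q Q' P + llr Q Q' P'.
Proof. by rewrite -big_split; apply: eq_bigr => j _; rewrite mxE mulrDl. Qed.

Lemma llrZ Q (Q' : 'rV[R]_n) a P : llr Q Q' (a *: P) = a * llr Q Q' P.
Proof. by rewrite mulr_sumr; apply: eq_bigr => j _; rewrite mxE mulrA. Qed.

Lemma llrB Q (Q' P P' : 'rV[R]_n) : llr Q Q' (P - P') = llr Q Q' P - llr Q Q' P'.
Proof. by rewrite llrD -scaleN1r llrZ mulN1r. Qed.

Lemma llr_mulmx m Q (Q' : 'rV[R]_n) (l : 'rV[R]_m) (M : 'M[R]_(m, n)) :
  llr Q Q' (l *m M) = \sum_i l 0 i * llr Q Q' (row i M).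
Proof.
rewrite /llr; under eq_bigr do rewrite mxE mulr_suml.
rewrite exchange_big /=; apply: eq_bigr => i _; rewrite mulr_sumr.
by apply: eq_bigr => j _; rewrite mxE mulrA.
Qed.

End Divergence.

Section Line.
Variables (R : realType) (n : nat).
Implicit Types A B Q : 'rV[R]_n.

Lemma in_L_line A B Q :
  in_L (col_mx A B) Q <-> (exists a, Q = a *: A + (1 - a) *: B) /\ in_open_simplex Q.
Proof.
split=> -[hl hQ]; split=> //.
  have [l [l1 ->]] := hl; exists (l 0 (lshift 1 ord0)).
  have -> : 1 - l 0 (lshift 1 ord0) = l 0 (rshift 1 ord0).
    by rewrite -l1 big_split_ord !big_ord1 /= addrAC subrr add0r.
  rewrite -{1}[l]hsubmxK mul_row_col [lsubmx l]mx11_scalar [rsubmx l]mx11_scalar.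
  by rewrite !mul_scalar_mx !mxE.
have [a ->] := hl; exists (row_mx a%:M (1 - a)%:M); split.
  by rewrite big_split_ord !big_ord1 row_mxEl row_mxEr !mxE /=; ring.
by rewrite mul_row_col !mul_scalar_mx.
Qed.
End Line.

Section Perturbation.
Variable R : realType.

Lemma lin_coef_eq0_of_local_min (d c K : R) : 0 < d ->
  (forall t, `|t| <= d -> 0 <= t * c + t ^+ 2 * K) -> c = 0.
Proof.
move=> d0 hmin; apply/eqP/negPn/negP => c0.
have den0 : 0 < `|c| + d * `|K| + 1 by rewrite ltr_wpDl // addr_ge0 ?mulr_ge0 // ltW.
set e := d / (`|c| + d * `|K| + 1).
have e0 : 0 < e by rewrite divr_gt0.
have de : e * `|c| + d * (e * `|K|) + e = d.
  by rewrite /e; field; rewrite gt_eqF.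
have eK : e * K < 1.
  have : d * (e * `|K|) < d * 1.
    by have := mulr_ge0 (ltW e0) (normr_ge0 c); rewrite mulr1; lra.
  by rewrite ltr_pM2l // => /(le_lt_trans (ler_wpM2l (ltW e0) (ler_norm K))).
have le_d : `|c| * e <= d.
  by have := mulr_ge0 (ltW d0) (mulr_ge0 (ltW e0) (normr_ge0 K)); lra.
have c2 : 0 < c ^+ 2 by rewrite exprn_even_gt0 // c0 orbT.
have gt0 : 0 < c ^+ 2 * e * (1 - e * K).
  by apply: mulr_gt0; [exact: mulr_gt0 | rewrite subr_gt0].
have := hmin (- (c * e)); rewrite normrN normrM (gtr0_norm e0) => /(_ le_d).
have -> : - (c * e) * c + (- (c * e)) ^+ 2 * K = - (c ^+ 2 * e * (1 - e * K)) by ring.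
lra.
Qed.

Lemma small_perturbation_gt0 n (Q v : 'rV[R]_n) : (forall j, 0 < Q 0 j) ->
  exists2 d, 0 < d & forall t, `|t| <= d -> forall j, 0 < Q 0 j + t * v 0 j.
Proof.
move=> Q0; set M := \sum_j `|v 0 j| / Q 0 j.
have M0 : 0 <= M by apply: sumr_ge0 => j _; rewrite divr_ge0 // ltW.
exists (M + 1)^-1 => [|t ht j]; first by rewrite invr_gt0; lra.
have vM : `|v 0 j| <= M * Q 0 j.
  rewrite -ler_pdivrMr // /M (bigD1 j) //= lerDl.
  by apply: sumr_ge0 => k _; rewrite divr_ge0 // ltW.
have : `|t * v 0 j| < Q 0 j.
  rewrite normrM; apply: (le_lt_trans (ler_pM (normr_ge0 _) (normr_ge0 _) ht vM)).
  rewrite mulrA -[ltRHS]mul1r ltr_pM2r // ltr_pdivrMl ?mulr1; lra.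
move/ltrNnormlW; lra.
Qed.
End Perturbation.

Section Projection.
Variables (R : realType) (n : nat).
Implicit Types A B Q : 'rV[R]_n.

Lemma projection_line_llr_eq A B Q0 Q1 :
  in_open_simplex A -> in_open_simplex B -> in_open_simplex Q0 ->
  is_projection (col_mx A B) Q0 Q1 -> llr Q0 Q1 A = llr Q0 Q1 B.
Proof.
move=> hA hB hQ0 [/in_L_line [[a eQ1] hQ1] hmin].
set v := A - B; set K := \sum_j v 0 j ^+ 2 / Q1 0 j.
have [d d0 Qt_gt0] := small_perturbation_gt0 v hQ1.1.
apply/eqP; rewrite -subr_eq0 -llrB -/v; apply/eqP.
apply: (@lin_coef_eq0_of_local_min _ d _ K d0) => t /Qt_gt0 {}Qt_gt0.
set Qt := Q1 + t *: v.
have hQt : in_open_simplex Qt.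
  split=> [j|]; first by rewrite 2!mxE; exact: Qt_gt0.
  under eq_bigr do rewrite !mxE.
  by rewrite big_split /= -mulr_sumr sumrB hQ1.2 hA.2 hB.2 subrr mulr0 addr0.
have Qt_line : in_L (col_mx A B) Qt.
  apply/in_L_line; split=> //; exists (a + t).
  by apply/rowP => j; rewrite /Qt /v eQ1 !mxE; ring.
have := hmin Qt Qt_line.
have := KL_llr hQt hQ0 hQ1; rewrite llrD llrZ llr_self //.
have : KL Qt Q1 <= t ^+ 2 * K.
  apply: (le_trans (KL_le_chi2 hQt hQ1)); rewrite mulr_sumr; apply/ler_sum => j _.
  by rewrite !mxE (addrC (Q1 0 j)) addrK exprMn -mulrA.
lra.
Qed.
End Projection.

Section Segment.
Variables (R : realType) (n : nat).
Implicit Types x y Q : 'rV[R]_n.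

Lemma eq_of_KL_eq_beyond x y Q (b : R) :
  in_open_simplex x -> in_open_simplex y -> in_open_simplex Q -> b < 0 ->
  Q = x + b *: (y - x) -> KL x Q = KL y Q -> x = y.
Proof.
move=> hx hy hQ b0 eQ xy_eq; apply/esym/(KL_eq0 hy hx)/eqP.
rewrite eq_le KL_ge0 // andbT.
have : 0 <= llr Q x (y - x).
  apply: sumr_ge0 => j _.
  have -> : (y - x) 0 j * (ln (x 0 j) - ln (Q 0 j))
      = (Q 0 j - x 0 j) * (ln (Q 0 j) - ln (x 0 j)) / - b.
    by rewrite eQ !mxE; field; rewrite ?oppr_eq0 lt_eqF.
  by rewrite divr_ge0 ?ln_monotone_mul_ge0 ?hQ.1 ?hx.1 // oppr_ge0 ltW.
rewrite llrB; have := KL_llr hx hQ hx; have := KL_llr hy hQ hx.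
by rewrite KLxx //; lra.
Qed.

Lemma line_equidistant_in_segment x y Q (a : R) :
  in_open_simplex x -> in_open_simplex y -> in_open_simplex Q ->
  Q = a *: x + (1 - a) *: y -> KL x Q = KL y Q ->
  exists c : R, [/\ 0 <= c, c <= 1 & Q = c *: x + (1 - c) *: y].
Proof.
move=> hx hy hQ eQ xy_eq.
have collapse : x = y -> exists c : R, [/\ 0 <= c, c <= 1 & Q = c *: x + (1 - c) *: y].
  by move=> exy; exists 1; split=> //; rewrite eQ exy; apply/rowP => j; rewrite !mxE; ring.
have [a1 | a1] := lerP a 1; have [a0 | a0] := lerP 0 a.
- by exists a.
- apply/collapse/esym/(eq_of_KL_eq_beyond hy hx hQ a0) => //.
  by rewrite eQ; apply/rowP => j; rewrite !mxE; ring.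
- apply/collapse/(eq_of_KL_eq_beyond hx hy hQ (b := 1 - a)); rewrite ?subr_lt0 //.
  by rewrite eQ; apply/rowP => j; rewrite !mxE; ring.
- by have := lt_trans (lt_trans ltr01 a1) a0; rewrite ltxx.
Qed.
End Segment.

Section MutualInformation.
Variables (R : realType) (m n : nat) (Phi : 'M[R]_(m, n)).
Hypothesis rows_simplex : forall i, in_open_simplex (row i Phi).
Implicit Types (l : 'rV[R]_m) (Q : 'rV[R]_n).

Lemma mixture_in_open_simplex l : in_closed_simplex l -> in_open_simplex (l *m Phi).
Proof.
move=> [l_ge0 l_sum1]; have Phi_gt0 i j : 0 < Phi i j.
  by have := (rows_simplex i).1 j; rewrite mxE.
split=> [j|].
  have term_ge0 i : true -> 0 <= l 0 i * Phi i j by rewrite mulr_ge0 // ltW.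
  rewrite mxE lt_def sumr_ge0 ?andbT //.
  apply: contra_neq (oner_neq0 R) => /(psumr_eq0P term_ge0) sum0; rewrite -l_sum1.
  apply: big1 => i _; have /eqP := sum0 i isT.
  by rewrite mulf_eq0 (gt_eqF (Phi_gt0 i j)) orbF => /eqP.
under eq_bigr do rewrite mxE.
rewrite exchange_big /= -[RHS]l_sum1; apply: eq_bigr => i _.
rewrite -mulr_sumr -[RHS]mulr1 -(rows_simplex i).2; congr (_ * _).
by apply: eq_bigr => j _; rewrite mxE.
Qed.

Lemma mutual_infoE l Q : in_closed_simplex l -> in_open_simplex Q ->
  mutual_info l Phi = \sum_i l 0 i * KL (row i Phi) Q - KL (l *m Phi) Q.
Proof.
move=> hl hQ; have hlPhi := mixture_in_open_simplex hl.
rewrite -(llr_self hQ hlPhi) llr_mulmx -sumrB /mutual_info.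
apply: eq_bigr => i _; rewrite -mulrBr -(KL_llr (rows_simplex i) hQ hlPhi) mulr_sumr.
by apply: eq_bigr => j _; rewrite !mxE mulrA.
Qed.

Lemma mutual_info_le_sub_KL l Q (C : R) : in_closed_simplex l -> in_open_simplex Q ->
  (forall i, KL (row i Phi) Q <= C) -> mutual_info l Phi <= C - KL (l *m Phi) Q.
Proof.
move=> hl hQ KL_le; rewrite (mutual_infoE hl hQ) lerD2r -[leRHS]mul1r -hl.2 mulr_suml.
by apply: ler_sum => i _; rewrite ler_wpM2l ?hl.1.
Qed.

Lemma mutual_info_le l Q (C : R) : in_closed_simplex l -> in_open_simplex Q ->
  (forall i, KL (row i Phi) Q <= C) -> mutual_info l Phi <= C.
Proof.
move=> hl hQ KL_le; have := mutual_info_le_sub_KL hl hQ KL_le.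
by have := KL_ge0 (mixture_in_open_simplex hl) hQ; lra.
Qed.

Lemma mutual_info_eq_output l Q (C : R) : in_closed_simplex l -> in_open_simplex Q ->
  (forall i, KL (row i Phi) Q <= C) -> mutual_info l Phi = C -> l *m Phi = Q.
Proof.
move=> hl hQ KL_le info_eq; apply: (KL_eq0 (mixture_in_open_simplex hl) hQ).
have := mutual_info_le_sub_KL hl hQ KL_le; have := KL_ge0 (mixture_in_open_simplex hl) hQ.
by rewrite info_eq; lra.
Qed.

Lemma mutual_info_attained l Q (C : R) : in_closed_simplex l -> in_open_simplex Q ->
  l *m Phi = Q -> (forall i, l 0 i != 0 -> KL (row i Phi) Q = C) ->
  mutual_info l Phi = C.
Proof.
move=> hl hQ lPhi KL_eq; rewrite (mutual_infoE hl hQ) lPhi KLxx // subr0.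
rewrite -[RHS]mul1r -hl.2 mulr_suml; apply: eq_bigr => i _.
by have [-> | /KL_eq ->] := eqVneq (l 0 i) 0; rewrite ?mul0r.
Qed.
End MutualInformation.

Section ThreeRows.
Variables (R : realType) (n : nat) (Phi : 'M[R]_(3, n)).

Lemma ord3P (i : 'I_3) : [\/ i = i1, i = i2 | i = i3].
Proof.
by case: i => -[|[|[|//]]] ?; [apply: Or31 | apply: Or32 | apply: Or33]; apply: val_inj.
Qed.

Lemma sum_ord3 (F : 'I_3 -> R) : \sum_i F i = F i1 + F i2 + F i3.
Proof.
rewrite !big_ord_recl big_ord0 addr0 addrA.
by congr (F _ + F _ + F _); apply: val_inj.
Qed.

Lemma segment_input (c : R) : 0 <= c <= 1 ->
  exists2 l : 'rV[R]_3, in_closed_simplex l /\ l 0 i1 = 0 &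
    l *m Phi = c *: row i2 Phi + (1 - c) *: row i3 Phi.
Proof.
case/andP=> c0 c1; exists (\row_i (if i == i2 then c else if i == i3 then 1 - c else 0)).
  split; last by rewrite mxE.
  split; last by rewrite sum_ord3 !mxE /=; ring.
  by move=> i; rewrite mxE; case: (ord3P i) => ->; rewrite //= subr_ge0.
by apply/rowP => j; rewrite !mxE sum_ord3 !mxE /=; ring.
Qed.

Variables (Q0 Q1 : 'rV[R]_n).
Hypotheses (hrows : forall i, in_open_simplex (row i Phi)) (hQ0 : equidistant Phi Q0)
  (hQ1 : is_projection (col_mx (row i2 Phi) (row i3 Phi)) Q0 Q1).

Let hQ0s : in_open_simplex Q0 := hQ0.1.2.
Let hQ1s : in_open_simplex Q1 := hQ1.1.2.

Lemma KL_row_projection i :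
  KL (row i Phi) Q1 = KL (row i2 Phi) Q0 - llr Q0 Q1 (row i Phi).
Proof. by rewrite (KL_llr (hrows i) hQ0s hQ1s) (hQ0.2 i i2). Qed.

Lemma KL_rows23_projection i : i != i1 -> KL (row i Phi) Q1 = KL (row i2 Phi) Q1.
Proof.
case: (ord3P i) => -> // _; rewrite !KL_row_projection.
by rewrite (projection_line_llr_eq (hrows i2) (hrows i3) hQ0s hQ1).
Qed.

Lemma KL_row1_projection_le (l0 : 'rV[R]_3) :
  bary_coord Phi Q0 l0 -> l0 0 i1 < 0 -> KL (row i1 Phi) Q1 <= KL (row i2 Phi) Q1.
Proof.
move=> [l0_sum1 eQ0] l01_lt0; rewrite !KL_row_projection lerD2l lerN2.
have [/in_L_line [[a eQ1] _] _] := hQ1.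
have d23 := projection_line_llr_eq (hrows i2) (hrows i3) hQ0s hQ1.
have dQ1 : llr Q0 Q1 Q1 = llr Q0 Q1 (row i2 Phi).
  by rewrite [X in llr _ _ X]eQ1 llrD !llrZ -d23; ring.
have : 0 <= llr Q0 Q1 Q1 by rewrite llr_self // KL_ge0.
have : llr Q0 Q1 Q0 <= 0 by rewrite llr_ref // oppr_le0 KL_ge0.
rewrite [X in llr _ _ X]eQ0 llr_mulmx sum_ord3 -d23 dQ1; rewrite sum_ord3 in l0_sum1; nra.
Qed.

Lemma KL_rows_projection_le i (l0 : 'rV[R]_3) :
  bary_coord Phi Q0 l0 -> l0 0 i1 < 0 -> KL (row i Phi) Q1 <= KL (row i2 Phi) Q1.
Proof.
move=> hl0 hl01; have [-> | /KL_rows23_projection -> //] := eqVneq i i1.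
exact: (KL_row1_projection_le hl0 hl01).
Qed.

End ThreeRows.

Unset Implicit Arguments.

Theorem theorem16 (R : realType) (n : nat) (Phi : 'M[R]_(3, n))
  (hrows : forall i, in_open_simplex (row i Phi))
  (hgp : general_position Phi)
  (Q0 : 'rV[R]_n) (hQ0 : equidistant Phi Q0)
  (l0 : 'rV[R]_3) (hl0 : bary_coord Phi Q0 l0)
  (hl1 : l0 0 i1 < 0) (hl2 : 0 <= l0 0 i2) (hl3 : 0 <= l0 0 i3)
  (Q1 : 'rV[R]_n)
  (hQ1 : is_projection (col_mx (row i2 Phi) (row i3 Phi)) Q0 Q1) :
  (* C = max_lambda I(lambda,Phi) = D(P^2 || Q^1) *)
  (exists l : 'rV[R]_3, in_closed_simplex l /\
      mutual_info l Phi = KL (row i2 Phi) Q1) /\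
  (forall l : 'rV[R]_3, in_closed_simplex l ->
      mutual_info l Phi <= KL (row i2 Phi) Q1) /\
  (* Q^* = Q^1 : every capacity-achieving input yields output Q^1 *)
  (forall l : 'rV[R]_3, in_closed_simplex l ->
      mutual_info l Phi = KL (row i2 Phi) Q1 -> l *m Phi = Q1).
Proof.
have [/in_L_line [[a eQ1] hQ1s] _] := hQ1.
have KL_le i := KL_rows_projection_le hrows hQ0 hQ1 i hl0 hl1.
split; [|split] => [|l hl|l hl]; last 2 first.
- exact: (mutual_info_le hrows hl hQ1s KL_le).
- exact: (mutual_info_eq_output hrows hl hQ1s KL_le).
have [c [c0 c1 eQ1c]] := line_equidistant_in_segment (hrows i2) (hrows i3) hQ1s eQ1
  (esym (KL_rows23_projection hrows hQ0 hQ1 (i := i3) isT)).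
have [l [hl l1_0] lPhi] := segment_input Phi (introT andP (conj c0 c1)).
exists l; split=> //; apply: (mutual_info_attained hrows hl hQ1s); first by rewrite lPhi.
move=> i li; apply: (KL_rows23_projection hrows hQ0 hQ1).
by apply: contra_neq li => ->.
Qed.
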